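(* Let $u_0,v_0>0$, $s_0>1$, let $\omega_0>0$ and $\omega_1,\omega_2,\dots\in\mathbb{R}$, and let $U_k,V_k:\mathbb{R}\to\mathbb{R}$ ($k\ge1$) be real analytic $2\pi$-periodic functions with Fourier expansions $U_k(t)=\sum_{n\in\mathbb{Z}}\hat U_k(n)e^{int}$, $V_k(t)=\sum_{n\in\mathbb{Z}}\hat V_k(n)e^{int}$. Put $\omega(\varepsilon)=\sum_{k\ge0}\omega_k\varepsilon^k$, $U(t,\varepsilon)=\sum_{k\ge1}U_k(t)\varepsilon^k$, $V(t,\varepsilon)=\sum_{k\ge1}V_k(t)\varepsilon^k$, and let $d_k(t)$ denote the coefficient of $\varepsilon^k$ in the formal Taylor expansion in $\varepsilon$ of $$\frac{U(t,\varepsilon)+u_0}{V(t-s_0\omega(\varepsilon),\varepsilon)+v_0},$$ so that $d_0=u_0/v_0$. For $k\ge2$ write $d_k(t)=\sum_{n\in\mathbb{Z}}\hat d_k(n)e^{int}$ with $\hat d_k(n)=\overline{\hat d_k(-n)}$. Then for every $k\ge2$ and $n\in\mathbb{Z}$, $$\hat d_k(n)=\frac{d_0}{v_0}\,ni\,\omega_{k-1}s_0\,\hat V_1(n)e^{-ni\omega_0s_0}+h,$$ where $h$ is an expression whose terms depend only on $\hat U_1,\hat V_1,\dots,\hat U_k,\hat V_k$ and $\omega_0,\dots,\omega_{k-2}$ (and on $n$, $u_0$, $v_0$, $s_0$).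
   Context: The expansion of $V_j(t-s_0\omega(\varepsilon))$ in $\varepsilon$ is the Taylor expansion of $V_j$ about $t-s_0\omega_0$ composed with $\omega(\varepsilon)-\omega_0$; the quotient is expanded as a formal power series in $\varepsilon$. *)

From Stdlib Require Import Reals ZArith.
From Coquelicot Require Import Coquelicot.
Open Scope R_scope.

(** Formal power series in epsilon (coefficient sequences). *)
Definition ps := nat -> R.
Definition ps_one : ps := fun k => match k with O => 1 | _ => 0 end.
Definition ps_mul (a b : ps) : ps :=
  fun k => sum_f_R0 (fun i => a i * b (k - i)%nat) k.
Definition ps_pow (a : ps) (p : nat) : ps := Nat.iter p (ps_mul a) ps_one.

(** [delta omega s0] = - s0 (omega(eps) - omega_0), a series with zero constant term. *)
Definition delta (omega : nat -> R) (s0 : R) : ps :=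
  fun k => match k with O => 0 | _ => - s0 * omega k end.

(** Coefficient of eps^m in V_j(t - s0 omega(eps)): Taylor expansion of V_j about
    t - s0 omega_0 composed with omega(eps) - omega_0 (only p <= m contribute). *)
Definition shifted_coef (f : R -> R) (omega : nat -> R) (s0 t : R) (m : nat) : R :=
  sum_f_R0 (fun p => Derive_n f p (t - s0 * omega O) / INR (fact p)
                     * ps_pow (delta omega s0) p m) m.

Definition num_ps (U : nat -> R -> R) (u0 t : R) : ps :=
  fun k => match k with O => u0 | _ => U k t end.

(** B(t,eps) := V(t - s0 omega(eps), eps), zero constant term. *)
Definition den_tail (V : nat -> R -> R) (omega : nat -> R) (s0 t : R) : ps :=
  fun k => match k with
           | O => 0
           | _ => sum_f_R0 (fun j => match j with
                                     | O => 0
                                     | _ => shifted_coef (V j) omega s0 t (k - j)%nat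
                                     end) k
           end.

(** 1/(v0 + B) = sum_p (-B)^p / v0^(p+1), exact coefficientwise since B = O(eps). *)
Definition inv_den_ps (V : nat -> R -> R) (omega : nat -> R) (v0 s0 t : R) : ps :=
  fun k => sum_f_R0 (fun p => ps_pow (fun i => - den_tail V omega s0 t i) p k
                              / v0 ^ (S p)) k.

Definition dcoef (U V : nat -> R -> R) (omega : nat -> R) (u0 v0 s0 : R)
  (k : nat) (t : R) : R :=
  ps_mul (num_ps U u0 t) (inv_den_ps V omega v0 s0 t) k.

Definition cis (th : R) : C := (cos th, sin th).

(** Fourier coefficient f^(n) = (1/2pi) int_0^{2pi} f(t) e^{-int} dt, for real f,
    written via its real and imaginary parts. *)
Definition fourier (f : R -> R) (n : Z) : C :=
  (/ (2 * PI) * RInt (fun t => f t * cos (IZR n * t)) 0 (2 * PI),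
   - (/ (2 * PI) * RInt (fun t => f t * sin (IZR n * t)) 0 (2 * PI))).

Definition periodic2pi (f : R -> R) : Prop := forall t, f (t + 2 * PI) = f t.

Definition real_analytic (f : R -> R) : Prop :=
  (forall m x, ex_derive_n f m x) /\
  forall x0, exists r, 0 < r /\ forall x, Rabs (x - x0) < r ->
    is_series (fun m => Derive_n f m x0 / INR (fact m) * (x - x0) ^ m) (f x).

(* The coefficient d_k is a polynomial in u0, 1/v0, the values U_j(t), the Taylor coefficients of
   the V_j at t - s0 omega_0 and in omega_1, ..., omega_{k-1}.  Only the first-order Taylor term of
   V_1(t - s0 omega(eps)) sees omega_{k-1}: changing omega_{k-1} by c changes d_k(t) by
   (u0 s0 c / v0^2) V_1'(t - s0 omega_0), while the omega_j with j >= k do not enter at all.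
   The Fourier coefficients of V_1'(t - a) are n i e^{-ina} \hat V_1(n), so this change is exactly
   the change of the leading term.  Hence \hat d_k(n) minus the leading term depends only on
   U_1..U_k, V_1..V_k and omega_0..omega_{k-2}; since continuous periodic functions are determined
   by their Fourier coefficients, it is a function h of the Fourier data (picked by Hilbert's
   epsilon).  Uniqueness of Fourier coefficients is proved with the trigonometric polynomials
   (1 + cos t)^N, which concentrate at 0. *)

From Stdlib Require Import Reals ZArith Lia Lra FunctionalExtensionality ClassicalEpsilon.
From Coquelicot Require Import Coquelicot.
Open Scope R_scope.

Lemma sum_f_R0_single (f : nat -> R) n j : (j <= n)%nat ->
  (forall i, (i <= n)%nat -> i <> j -> f i = 0) -> sum_f_R0 f n = f j.
Proof.
  induction n as [|n IH]; intros Hj Hf; simpl.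
  - now replace j with 0%nat by lia.
  - destruct (Nat.eq_dec j (S n)) as [->|Hne].
    + rewrite sum_eq_R0; [ring|]. intros i Hi; apply Hf; lia.
    + rewrite IH, (Hf (S n)); [ring|lia|lia|lia|]. intros i Hi; apply Hf; lia.
Qed.

Lemma ps_mul_ext (a b a' b' : ps) k :
  (forall i, (i <= k)%nat -> a i = a' i) -> (forall i, (i <= k)%nat -> b i = b' i) ->
  ps_mul a b k = ps_mul a' b' k.
Proof.
  intros Ha Hb. apply sum_eq. intros i Hi. rewrite Ha, Hb by lia. reflexivity.
Qed.

Lemma ps_pow_ext (a b : ps) p m :
  (forall i, (i <= m)%nat -> a i = b i) -> ps_pow a p m = ps_pow b p m.
Proof.
  revert m; induction p as [|p IH]; intros m H; [reflexivity|].
  apply ps_mul_ext; [exact H|]. intros i Hi. apply IH. intros; apply H; lia.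
Qed.

Lemma ps_pow_lt_order (a : ps) p j : a O = 0 -> (j < p)%nat -> ps_pow a p j = 0.
Proof.
  intros Ha0; revert j; induction p as [|p IH]; intros j Hj; [lia|].
  apply sum_eq_R0. intros [|i] Hi; [rewrite Ha0; ring|]. rewrite IH by lia. ring.
Qed.

Lemma ps_pow_1 (a : ps) m : ps_pow a 1 m = a m.
Proof.
  change (sum_f_R0 (fun i => a i * ps_one (m - i)%nat) m = a m).
  rewrite (sum_f_R0_single _ m m), Nat.sub_diag by
    (lia || (intros i Hi Hne; destruct (m - i)%nat eqn:E; [lia|]; simpl; ring)).
  simpl; ring.
Qed.

Lemma ps_pow_S_agree (a b : ps) N p m : a O = 0 -> b O = 0 ->
  (forall i, (i < N)%nat -> a i = b i) -> (m < N + p)%nat ->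
  ps_pow a (S p) m = ps_pow b (S p) m.
Proof.
  intros Ha Hb Hab; revert m; induction p as [|p IH]; intros m Hm.
  - apply ps_pow_ext. intros; apply Hab; lia.
  - change (ps_mul a (ps_pow a (S p)) m = ps_mul b (ps_pow b (S p)) m).
    apply sum_eq. intros [|i] Hi; [rewrite Ha, Hb; ring|].
    destruct (Nat.lt_ge_cases (S i) N).
    + rewrite Hab, IH by lia. reflexivity.
    + rewrite !(ps_pow_lt_order _ (S p)) by (assumption || lia). ring.
Qed.

Section OmegaPerturbation.

Variables (omega omega' : nat -> R) (s0 t : R) (N : nat).
Hypothesis N_pos : (1 <= N)%nat.
Hypothesis omega_agree : forall i, (i < N)%nat -> omega i = omega' i.

Lemma delta_agree i : (i < N)%nat -> delta omega s0 i = delta omega' s0 i.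
Proof. intros Hi. destruct i; simpl; [reflexivity|]. now rewrite omega_agree. Qed.

Lemma ps_pow_delta_agree p m : (m < N + p)%nat ->
  ps_pow (delta omega s0) (S p) m = ps_pow (delta omega' s0) (S p) m.
Proof. apply ps_pow_S_agree; [reflexivity | reflexivity | exact delta_agree]. Qed.

Lemma shifted_coef_agree f m : (m < N)%nat ->
  shifted_coef f omega s0 t m = shifted_coef f omega' s0 t m.
Proof.
  intros Hm. apply sum_eq. intros [|p] Hp; rewrite (omega_agree O) by lia; [reflexivity|].
  rewrite ps_pow_delta_agree by lia. reflexivity.
Qed.

(* Only the linear Taylor term [p = 1] sees the coefficient of index [N]. *)
Lemma shifted_coef_perturb f :
  shifted_coef f omega s0 t N - shifted_coef f omega' s0 t N =
  - s0 * (omega N - omega' N) * Derive f (t - s0 * omega O).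
Proof.
  unfold shifted_coef. rewrite <- minus_sum, (omega_agree O) by lia.
  rewrite (sum_f_R0_single _ N 1); [| lia |].
  - rewrite !ps_pow_1. destruct N as [|N']; [lia|]. simpl.
    change (Derive (fun x => f x)) with (Derive f). field.
  - intros [|[|p]] Hp Hne; [simpl; ring | lia |].
    rewrite ps_pow_delta_agree by lia. ring.
Qed.

Lemma den_tail_agree V i : (i <= N)%nat ->
  den_tail V omega s0 t i = den_tail V omega' s0 t i.
Proof.
  intros Hi. destruct i; [reflexivity|]. apply sum_eq. intros [|j] Hj; [reflexivity|].
  apply shifted_coef_agree. lia.
Qed.

Lemma den_tail_perturb V :
  den_tail V omega s0 t (S N) - den_tail V omega' s0 t (S N) =
  - s0 * (omega N - omega' N) * Derive (V 1%nat) (t - s0 * omega O).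
Proof.
  unfold den_tail. rewrite <- minus_sum, (sum_f_R0_single _ (S N) 1).
  - replace (S N - 1)%nat with N by lia. apply shifted_coef_perturb.
  - lia.
  - intros [|j] Hj Hne; [ring|]. rewrite shifted_coef_agree by lia. ring.
Qed.

Lemma inv_den_agree V v0 i : (i <= N)%nat ->
  inv_den_ps V omega v0 s0 t i = inv_den_ps V omega' v0 s0 t i.
Proof.
  intros Hi. apply sum_eq. intros p Hp. f_equal. apply ps_pow_ext.
  intros j Hj. rewrite den_tail_agree by lia. reflexivity.
Qed.

Lemma inv_den_perturb V v0 : v0 <> 0 ->
  inv_den_ps V omega v0 s0 t (S N) - inv_den_ps V omega' v0 s0 t (S N) =
  s0 * (omega N - omega' N) * Derive (V 1%nat) (t - s0 * omega O) / v0 ^ 2.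
Proof.
  intros Hv0. unfold inv_den_ps. rewrite <- minus_sum, (sum_f_R0_single _ (S N) 1).
  - rewrite !ps_pow_1.
    transitivity (- (den_tail V omega s0 t (S N) - den_tail V omega' s0 t (S N)) / v0 ^ 2).
    + simpl. field. exact Hv0.
    + rewrite den_tail_perturb. field. exact Hv0.
  - lia.
  - intros [|[|p]] Hp Hne; [simpl; field; exact Hv0 | lia |].
    rewrite (ps_pow_S_agree _ (fun i => - den_tail V omega' s0 t i) (S N));
      try (simpl; ring) || lia.
    intros i Hi. rewrite den_tail_agree by lia. reflexivity.
Qed.

Lemma dcoef_perturb U V u0 v0 : v0 <> 0 ->
  dcoef U V omega u0 v0 s0 (S N) t - dcoef U V omega' u0 v0 s0 (S N) t =
  u0 * s0 * (omega N - omega' N) / v0 ^ 2 * Derive (V 1%nat) (t - s0 * omega O).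
Proof.
  intros Hv0. unfold dcoef, ps_mul. rewrite <- minus_sum, (sum_f_R0_single _ (S N) 0).
  - transitivity (u0 * (inv_den_ps V omega v0 s0 t (S N) - inv_den_ps V omega' v0 s0 t (S N))).
    + rewrite Nat.sub_0_r. simpl. ring.
    + rewrite inv_den_perturb by exact Hv0. field. exact Hv0.
  - lia.
  - intros i Hi Hne. rewrite inv_den_agree by lia. ring.
Qed.

End OmegaPerturbation.

Lemma dcoef_ext U V U' V' omega u0 v0 s0 k t :
  (forall j, (1 <= j <= k)%nat -> U j = U' j) -> (forall j, (1 <= j <= k)%nat -> V j = V' j) ->
  dcoef U V omega u0 v0 s0 k t = dcoef U' V' omega u0 v0 s0 k t.
Proof.
  intros HU HV. apply ps_mul_ext.
  - intros [|i] Hi; [reflexivity|]. unfold num_ps. now rewrite HU by lia.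
  - intros i Hi. apply sum_eq. intros p Hp. f_equal. apply ps_pow_ext.
    intros [|j] Hj; [reflexivity|]. f_equal. apply sum_eq.
    intros [|l] Hl; [reflexivity|]. now rewrite HV by lia.
Qed.

Lemma continuous_Rplus (f g : R -> R) x :
  continuous f x -> continuous g x -> continuous (fun t => f t + g t) x.
Proof. apply (continuous_plus f g). Qed.

Lemma continuous_Rmult (f g : R -> R) x :
  continuous f x -> continuous g x -> continuous (fun t => f t * g t) x.
Proof. apply (continuous_mult f g). Qed.

Lemma continuous_Ropp (f : R -> R) x : continuous f x -> continuous (fun t => - f t) x.
Proof. apply (continuous_opp f). Qed.

Ltac continuity_closure :=
  repeat first [ simple apply continuous_const | simple apply continuous_Rplus
               | simple apply continuous_Rmult | simple apply continuous_Ropp ].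

Lemma continuous_sum_f_R0 (F : R -> nat -> R) n x :
  (forall i, continuous (fun t => F t i) x) -> continuous (fun t => sum_f_R0 (F t) n) x.
Proof. intros HF. induction n; simpl; continuity_closure; auto. Qed.

Lemma continuous_ps_mul (a b : R -> ps) k x :
  (forall i, continuous (fun t => a t i) x) -> (forall i, continuous (fun t => b t i) x) ->
  continuous (fun t => ps_mul (a t) (b t) k) x.
Proof.
  intros Ha Hb. apply (continuous_sum_f_R0 (fun t i => a t i * b t (k - i)%nat)).
  intros i. continuity_closure; auto.
Qed.

Lemma continuous_ps_pow (a : R -> ps) p m x :
  (forall i, continuous (fun t => a t i) x) -> continuous (fun t => ps_pow (a t) p m) x.
Proof.
  intros Ha. revert m. induction p as [|p IH]; intros m.
  - apply continuous_const.
  - apply (continuous_ps_mul a (fun t => ps_pow (a t) p)); auto.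
Qed.

Lemma continuous_Derive_n_comp_sub f p c x :
  (forall m y, ex_derive_n f m y) -> continuous (fun t => Derive_n f p (t - c)) x.
Proof.
  intros Hf. apply (continuous_comp (fun t => t - c) (Derive_n f p)).
  - apply (@ex_derive_continuous R_AbsRing R_NormedModule). auto_derive. exact I.
  - apply (@ex_derive_continuous R_AbsRing R_NormedModule), (Hf (S p)).
Qed.

Lemma continuous_dcoef U V omega u0 v0 s0 k x :
  (forall j, (1 <= j)%nat -> forall y, continuous (U j) y) ->
  (forall j, (1 <= j)%nat -> forall m y, ex_derive_n (V j) m y) ->
  continuous (dcoef U V omega u0 v0 s0 k) x.
Proof.
  intros HU HV. apply (continuous_ps_mul (num_ps U u0) (inv_den_ps V omega v0 s0)).
  - intros [|i]; [apply continuous_const | apply HU; lia].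
  - intros i. apply continuous_sum_f_R0. intros p. unfold Rdiv. continuity_closure.
    apply continuous_ps_pow. intros [|j]; continuity_closure; [apply continuous_const|].
    unfold den_tail. apply continuous_sum_f_R0. intros [|l]; [apply continuous_const|].
    unfold shifted_coef. apply continuous_sum_f_R0. intros q. unfold Rdiv. continuity_closure.
    apply continuous_Derive_n_comp_sub, HV. lia.
Qed.

Ltac continuous_by_derive :=
  apply (@ex_derive_continuous R_AbsRing R_NormedModule); auto_derive; auto.

Lemma ex_RInt_continuous_R (f : R -> R) a b : (forall x, continuous f x) -> ex_RInt f a b.
Proof. intros Hf. apply (@ex_RInt_continuous R_CompleteNormedModule). intros; apply Hf. Qed.

Lemma RInt_scal_R (f : R -> R) c a b : ex_RInt f a b ->
  RInt (fun t => c * f t) a b = c * RInt f a b.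
Proof. exact (RInt_scal f a b c). Qed.

Lemma RInt_Rplus (f h : R -> R) a b : ex_RInt f a b -> ex_RInt h a b ->
  RInt (fun t => f t + h t) a b = RInt f a b + RInt h a b.
Proof. exact (RInt_plus f h a b). Qed.

Lemma RInt_lin (f h : R -> R) c d a b : ex_RInt f a b -> ex_RInt h a b ->
  RInt (fun t => c * f t + d * h t) a b = c * RInt f a b + d * RInt h a b.
Proof.
  intros Hf Hh. rewrite <- (RInt_scal_R f), <- (RInt_scal_R h) by assumption.
  apply RInt_Rplus; [apply (ex_RInt_scal f) | apply (ex_RInt_scal h)]; assumption.
Qed.

Lemma cos_add_2PI_Z x (m : Z) : cos (x + IZR m * (2 * PI)) = cos x.
Proof.
  destruct m as [|p|p]; rewrite ?IZR_NEG, <- ?(positive_nat_Z p), <- ?INR_IZR_INZ.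
  - f_equal. ring.
  - rewrite <- (cos_period x (Pos.to_nat p)). f_equal. ring.
  - rewrite <- (cos_period _ (Pos.to_nat p)). f_equal. ring.
Qed.

Lemma sin_add_2PI_Z x (m : Z) : sin (x + IZR m * (2 * PI)) = sin x.
Proof.
  destruct m as [|p|p]; rewrite ?IZR_NEG, <- ?(positive_nat_Z p), <- ?INR_IZR_INZ.
  - f_equal. ring.
  - rewrite <- (sin_period x (Pos.to_nat p)). f_equal. ring.
  - rewrite <- (sin_period _ (Pos.to_nat p)). f_equal. ring.
Qed.

Lemma periodic2pi_cos_Z (n : Z) phi : periodic2pi (fun t => cos (IZR n * t + phi)).
Proof. intros t. rewrite <- (cos_add_2PI_Z (IZR n * t + phi) n). f_equal. ring. Qed.

Lemma periodic2pi_sin_Z (n : Z) phi : periodic2pi (fun t => sin (IZR n * t + phi)).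
Proof. intros t. rewrite <- (sin_add_2PI_Z (IZR n * t + phi) n). f_equal. ring. Qed.

Lemma RInt_period_shift w a : (forall x, continuous w x) -> periodic2pi w ->
  RInt w a (a + 2 * PI) = RInt w 0 (2 * PI).
Proof.
  intros Hc Hp.
  assert (Hint : forall b c, ex_RInt w b c) by (intros; apply ex_RInt_continuous_R, Hc).
  assert (Htail : RInt w (2 * PI) (a + 2 * PI) = RInt w 0 a).
  { assert (E := RInt_comp_lin w 1 (2 * PI) 0 a (Hint _ _)).
    replace (1 * 0 + 2 * PI) with (2 * PI) in E by ring.
    replace (1 * a + 2 * PI) with (a + 2 * PI) in E by ring.
    rewrite <- E. apply RInt_ext. intros x _. cbn. rewrite !Rmult_1_l. apply Hp. }
  rewrite <- (RInt_Chasles w a (2 * PI) (a + 2 * PI)), Htail by apply Hint.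
  rewrite <- (RInt_Chasles w a 0 (2 * PI)), <- (opp_RInt_swap w 0 a) by apply Hint.
  cbn. ring.
Qed.

Lemma RInt_period_comp_sub w a : (forall x, continuous w x) -> periodic2pi w ->
  RInt (fun t => w (t - a)) 0 (2 * PI) = RInt w 0 (2 * PI).
Proof.
  intros Hc Hp. rewrite <- (RInt_period_shift w (- a)) by assumption.
  assert (E := RInt_comp_lin w 1 (- a) 0 (2 * PI) (ex_RInt_continuous_R _ _ _ Hc)).
  replace (1 * 0 + - a) with (- a) in E by ring.
  replace (1 * (2 * PI) + - a) with (- a + 2 * PI) in E by ring.
  rewrite <- E. apply RInt_ext. intros x _. cbn. rewrite !Rmult_1_l. reflexivity.
Qed.

Lemma RInt_mul_cos_add (f : R -> R) (n : Z) phi a b : (forall x, continuous f x) ->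
  RInt (fun t => f t * cos (IZR n * t + phi)) a b =
  cos phi * RInt (fun t => f t * cos (IZR n * t)) a b
  - sin phi * RInt (fun t => f t * sin (IZR n * t)) a b.
Proof.
  intros Hf. unfold Rminus. rewrite Ropp_mult_distr_l, <- RInt_lin.
  - apply RInt_ext. intros x _. cbn. rewrite cos_plus. ring.
  - apply ex_RInt_continuous_R. intros x. continuity_closure; [apply Hf | continuous_by_derive].
  - apply ex_RInt_continuous_R. intros x. continuity_closure; [apply Hf | continuous_by_derive].
Qed.

Lemma RInt_mul_sin_add (f : R -> R) (n : Z) phi a b : (forall x, continuous f x) ->
  RInt (fun t => f t * sin (IZR n * t + phi)) a b =
  sin phi * RInt (fun t => f t * cos (IZR n * t)) a b
  + cos phi * RInt (fun t => f t * sin (IZR n * t)) a b.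
Proof.
  intros Hf. rewrite <- RInt_lin.
  - apply RInt_ext. intros x _. cbn. rewrite sin_plus. ring.
  - apply ex_RInt_continuous_R. intros x. continuity_closure; [apply Hf | continuous_by_derive].
  - apply ex_RInt_continuous_R. intros x. continuity_closure; [apply Hf | continuous_by_derive].
Qed.

Lemma fourier_ext f g n : (forall t, f t = g t) -> fourier f n = fourier g n.
Proof.
  intros Hfg. unfold fourier.
  rewrite (RInt_ext (fun t => f t * cos (IZR n * t)) (fun t => g t * cos (IZR n * t))),
    (RInt_ext (fun t => f t * sin (IZR n * t)) (fun t => g t * sin (IZR n * t)));
    [reflexivity | intros; now rewrite Hfg ..].
Qed.

Lemma fourier_plus_scal f h K n : (forall x, continuous f x) -> (forall x, continuous h x) ->
  fourier (fun t => f t + K * h t) n = Cplus (fourier f n) (Cmult (RtoC K) (fourier h n)).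
Proof.
  intros Hf Hh. unfold fourier.
  rewrite (RInt_ext (fun t => (f t + K * h t) * cos (IZR n * t))
             (fun t => 1 * (f t * cos (IZR n * t)) + K * (h t * cos (IZR n * t)))),
    (RInt_ext (fun t => (f t + K * h t) * sin (IZR n * t))
       (fun t => 1 * (f t * sin (IZR n * t)) + K * (h t * sin (IZR n * t)))),
    !RInt_lin by (intros; cbn; ring || (apply ex_RInt_continuous_R; intros x;
                   continuity_closure; auto; continuous_by_derive)).
  apply injective_projections; cbn; ring.
Qed.

Lemma fourier_comp_sub f a n : (forall x, continuous f x) -> periodic2pi f ->
  fourier (fun t => f (t - a)) n = Cmult (cis (- (IZR n * a))) (fourier f n).
Proof.
  intros Hf Hp.
  assert (Hshift : forall trig : R -> R, (forall x, continuous trig x) -> periodic2pi trig ->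
    RInt (fun t => f (t - a) * trig (t - a)) 0 (2 * PI) = RInt (fun t => f t * trig t) 0 (2 * PI)).
  { intros trig Ht Htp. apply (RInt_period_comp_sub (fun t => f t * trig t)).
    - intros x. continuity_closure; auto.
    - intros t. now rewrite Hp, Htp. }
  unfold fourier.
  rewrite (RInt_ext (fun t => f (t - a) * cos (IZR n * t))
             (fun t => f (t - a) * cos (IZR n * (t - a) + IZR n * a))),
    (RInt_ext (fun t => f (t - a) * sin (IZR n * t))
       (fun t => f (t - a) * sin (IZR n * (t - a) + IZR n * a))),
    (Hshift (fun u => cos (IZR n * u + IZR n * a))),
    (Hshift (fun u => sin (IZR n * u + IZR n * a))),
    RInt_mul_cos_add, RInt_mul_sin_add;
    try (intros; do 2 f_equal; ring); auto using periodic2pi_cos_Z, periodic2pi_sin_Z;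
    try (intros; continuous_by_derive).
  unfold cis. rewrite cos_neg, sin_neg. apply injective_projections; cbn; ring.
Qed.

Lemma RInt_by_parts_period f g dg :
  (forall x, ex_derive f x) -> (forall x, continuous (Derive f) x) ->
  (forall x, is_derive g x (dg x)) -> (forall x, continuous dg x) ->
  f (2 * PI) * g (2 * PI) = f 0 * g 0 ->
  RInt (fun t => Derive f t * g t) 0 (2 * PI) = - RInt (fun t => f t * dg t) 0 (2 * PI).
Proof.
  intros Hf Hdf Hg Hdg Hbd.
  assert (Hcf : forall x, continuous f x)
    by (intros; apply (@ex_derive_continuous R_AbsRing R_NormedModule), Hf).
  assert (Hcg : forall x, continuous g x)
    by (intros; apply (@ex_derive_continuous R_AbsRing R_NormedModule); eexists; apply Hg).
  assert (HI : is_RInt (fun t => Derive f t * g t + f t * dg t) 0 (2 * PI)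
                 (f (2 * PI) * g (2 * PI) - f 0 * g 0)).
  { apply (@is_RInt_derive R_CompleteNormedModule (fun t => f t * g t)).
    - intros x _.
      apply (is_derive_mult f g); [apply Derive_correct, Hf | apply Hg | apply Rmult_comm].
    - intros x _. continuity_closure; auto. }
  apply (@is_RInt_unique R_CompleteNormedModule) in HI.
  rewrite RInt_Rplus, Hbd in HI by (apply ex_RInt_continuous_R; intros; continuity_closure; auto).
  lra.
Qed.

Lemma fourier_Derive f n : (forall x, ex_derive f x) -> (forall x, continuous (Derive f) x) ->
  periodic2pi f -> fourier (Derive f) n = Cmult (Cmult (RtoC (IZR n)) Ci) (fourier f n).
Proof.
  intros Hf Hdf Hp.
  assert (Hcf : forall x, continuous f x)
    by (intros; apply (@ex_derive_continuous R_AbsRing R_NormedModule), Hf).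
  assert (Hf2PI : f (2 * PI) = f 0) by (rewrite <- (Hp 0), Rplus_0_l; reflexivity).
  unfold fourier.
  rewrite (RInt_by_parts_period f (fun t => cos (IZR n * t)) (fun t => - IZR n * sin (IZR n * t))),
    (RInt_by_parts_period f (fun t => sin (IZR n * t)) (fun t => IZR n * cos (IZR n * t)));
    auto; try (intros; auto_derive; auto; ring); try (intros; continuous_by_derive).
  - rewrite (RInt_ext _ (fun t => - IZR n * (f t * sin (IZR n * t)))),
      (RInt_ext (fun t => f t * (IZR n * cos (IZR n * t)))
         (fun t => IZR n * (f t * cos (IZR n * t)))),
      !RInt_scal_R by (intros; cbn; ring || (apply ex_RInt_continuous_R; intros;
                         continuity_closure; auto; continuous_by_derive)).
    apply injective_projections; cbn; ring.
  - rewrite Hf2PI, <- (Rplus_0_l (IZR n * (2 * PI))), sin_add_2PI_Z, Rmult_0_r. ring.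
  - rewrite Hf2PI, <- (Rplus_0_l (IZR n * (2 * PI))), cos_add_2PI_Z, Rmult_0_r. ring.
Qed.

Lemma fourier_eq0_RInt f m : fourier f m = RtoC 0 ->
  RInt (fun t => f t * cos (IZR m * t)) 0 (2 * PI) = 0 /\
  RInt (fun t => f t * sin (IZR m * t)) 0 (2 * PI) = 0.
Proof.
  intros H. injection H as Hc Hs.
  assert (/ (2 * PI) <> 0) by (apply Rinv_neq_0_compat; generalize PI_RGT_0; lra).
  split; apply (Rmult_eq_reg_l (/ (2 * PI))); auto; lra.
Qed.

(* cos(A) (1 + cos t) = cos(A) + (cos(A + t) + cos(A - t)) / 2 lets the degree in cos t drop. *)
Lemma RInt_cos_kernel_eq0 f : (forall x, continuous f x) -> (forall m, fourier f m = RtoC 0) ->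
  forall j (m : Z) phi,
  RInt (fun t => f t * (cos (IZR m * t + phi) * (1 + cos t) ^ j)) 0 (2 * PI) = 0.
Proof.
  intros Hf Hz j. induction j as [|j IH]; intros m phi.
  - rewrite (RInt_ext _ (fun t => f t * cos (IZR m * t + phi)))
      by (intros; cbn; now rewrite Rmult_1_r).
    destruct (fourier_eq0_RInt f m (Hz m)) as [Hc Hs].
    rewrite RInt_mul_cos_add, Hc, Hs by exact Hf. cbn. ring.
  - set (g := fun m' phi' t => f t * (cos (IZR m' * t + phi') * (1 + cos t) ^ j)).
    assert (Hg : forall m' phi', ex_RInt (g m' phi') 0 (2 * PI)).
    { intros. apply ex_RInt_continuous_R. intros x. unfold g.
      continuity_closure; [apply Hf | continuous_by_derive | continuous_by_derive]. }
    rewrite (RInt_ext _ (fun t => 1 * g m phi t + / 2 * (g (m + 1)%Z phi t + g (m - 1)%Z phi t))).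
    + rewrite RInt_lin, RInt_Rplus;
        [| apply Hg | apply Hg | apply Hg | apply (ex_RInt_plus (g _ _) (g _ _)); apply Hg].
      unfold g. rewrite !IH. cbn. ring.
    + intros t _. unfold g. cbn -[pow cos IZR]. rewrite plus_IZR, minus_IZR, <- tech_pow_Rmult.
      replace ((IZR m + 1) * t + phi) with ((IZR m * t + phi) + t) by ring.
      replace ((IZR m - 1) * t + phi) with ((IZR m * t + phi) - t) by ring.
      rewrite (cos_plus (IZR m * t + phi) t), (cos_minus (IZR m * t + phi) t). field.
Qed.

Lemma cos_Rabs t : cos (Rabs t) = cos t.
Proof. destruct (Rcase_abs t); [rewrite Rabs_left, cos_neg | rewrite Rabs_right]; auto. Qed.

Lemma one_plus_cos_pow_le d t N : 0 <= d <= Rabs t -> Rabs t <= PI ->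
  0 <= (1 + cos t) ^ N <= (1 + cos d) ^ N.
Proof.
  intros Hd Ht. rewrite <- (cos_Rabs t). pose proof (COS_bound (Rabs t)).
  assert (cos (Rabs t) <= cos d) by (apply cos_decr_1; lra).
  split; [apply pow_le | apply pow_incr]; lra.
Qed.

Lemma one_plus_cos_pow_ge d t N : Rabs t <= d <= PI ->
  (1 + cos d) ^ N <= (1 + cos t) ^ N.
Proof.
  intros Ht. rewrite <- (cos_Rabs t). pose proof (COS_bound d). pose proof (Rabs_pos t).
  assert (cos d <= cos (Rabs t)) by (apply cos_decr_1; lra).
  apply pow_incr; lra.
Qed.

Lemma continuous_pos_near f x : continuous f x -> 0 < f x ->
  exists d, 0 < d /\ forall t, Rabs (t - x) < d -> f x / 2 < f t.
Proof.
  intros Hc Hpos.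
  destruct (proj1 (filterlim_locally f (f x)) Hc (mkposreal (f x / 2) ltac:(lra))) as [d Hd].
  exists d. split; [apply cond_pos|]. intros t Ht.
  assert (Hball : Rabs (f t - f x) < f x / 2) by exact (Hd t Ht).
  apply Rabs_lt_between in Hball. lra.
Qed.

Lemma RInt_ge_const (f : R -> R) a b c : a <= b -> ex_RInt f a b ->
  (forall t, a < t < b -> c <= f t) -> (b - a) * c <= RInt f a b.
Proof.
  intros Hab Hf Hc.
  replace ((b - a) * c) with (RInt (fun _ => c) a b)
    by exact (RInt_const (V := R_CompleteNormedModule) a b c).
  apply RInt_le; auto. apply ex_RInt_const.
Qed.

Lemma continuous_lower_bound f a b : a <= b -> (forall x, continuous f x) ->
  exists M, 0 <= M /\ forall t, a <= t <= b -> - M <= f t.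
Proof.
  intros Hab Hc.
  destruct (continuity_ab_min f a b) as [xm [Hmin _]];
    [exact Hab | intros; apply continuity_pt_filterlim, Hc |].
  exists (Rabs (f xm)). split; [apply Rabs_pos|].
  intros t Ht. pose proof (Rabs_pos (f xm)). pose proof (Rle_abs (- f xm)).
  rewrite Rabs_Ropp in *. specialize (Hmin t Ht). lra.
Qed.

Lemma pow_eventually_lt q r c : 0 <= q < r -> 0 < c -> exists N, q ^ N < c * r ^ N.
Proof.
  intros Hqr Hc.
  destruct (pow_lt_1_zero (q / r)) with (y := c) as [N HN]; [| exact Hc |].
  - rewrite Rabs_right by (apply Rle_ge, Rdiv_le_0_compat; lra).
    apply (Rmult_lt_reg_r r); [lra|]. unfold Rdiv. rewrite Rmult_assoc, Rinv_l; lra.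
  - exists N. specialize (HN N (le_n N)).
    rewrite Rabs_right in HN by (apply Rle_ge, pow_le, Rdiv_le_0_compat; lra).
    replace (q ^ N) with ((q / r) ^ N * r ^ N) by (rewrite <- Rpow_mult_distr; f_equal; field; lra).
    apply Rmult_lt_compat_r; [apply pow_lt; lra | exact HN].
Qed.

(* The kernels (1 + cos t)^N concentrate at 0: outside [-d, d] they are at most q^N, on
   [-d/2, d/2] at least r^N, where q = 1 + cos d < r = 1 + cos (d/2). *)
Lemma RInt_cos_kernel_pos f : (forall x, continuous f x) -> 0 < f 0 ->
  exists N, 0 < RInt (fun t => f t * (1 + cos t) ^ N) (- PI) PI.
Proof.
  intros Hc Hf0. pose proof PI_RGT_0 as HPI.
  destruct (continuous_pos_near f 0 (Hc 0) Hf0) as [e [He Hnear]].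
  set (d := Rmin (e / 2) (PI / 2)).
  assert (Hd : 0 < d <= PI / 2 /\ d < e).
  { unfold d. pose proof (Rmin_l (e / 2) (PI / 2)). pose proof (Rmin_r (e / 2) (PI / 2)).
    split; [split; [apply Rmin_glb_lt|] |]; lra. }
  destruct (continuous_lower_bound f (- PI) PI) as [M [HM0 HM]]; [lra | exact Hc |].
  set (q := 1 + cos d). set (r := 1 + cos (d / 2)).
  assert (Hqr : 0 <= q < r).
  { unfold q, r. pose proof (COS_bound d). split; [lra|].
    apply Rplus_lt_compat_l, cos_decreasing_1; lra. }
  destruct (pow_eventually_lt q r (d * f 0 / (4 * PI * (M + 1)))) as [N HN]; [exact Hqr | |].
  { apply Rdiv_lt_0_compat; [apply Rmult_lt_0_compat|]; nra. }
  exists N. set (F := fun t => f t * (1 + cos t) ^ N). change (0 < RInt F (- PI) PI).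
  assert (HF : forall a b, ex_RInt F a b).
  { intros. apply ex_RInt_continuous_R. intros. unfold F.
    continuity_closure; [apply Hc | continuous_by_derive]. }
  pose proof (pow_le q N (proj1 Hqr)) as HqN.
  assert (Hlow : forall t, - PI <= t <= PI -> - M * q ^ N <= F t).
  { intros t Ht. unfold F. specialize (HM t Ht).
    destruct (Rlt_or_le (Rabs t) d) as [Htd|Htd].
    - assert (0 < f t)
        by (apply (Rlt_trans _ (f 0 / 2)); [lra | apply Hnear; rewrite Rminus_0_r; lra]).
      assert (0 <= f t * (1 + cos t) ^ N)
        by (apply Rmult_le_pos; [lra | apply pow_le; pose proof (COS_bound t); lra]).
      nra.
    - destruct (one_plus_cos_pow_le d t N) as [H0 H1]; [lra | apply Rabs_le; lra |]. fold q in H1.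
      assert (0 <= (f t + M) * (1 + cos t) ^ N) by (apply Rmult_le_pos; lra).
      assert (0 <= M * (q ^ N - (1 + cos t) ^ N)) by (apply Rmult_le_pos; lra).
      lra. }
  assert (Hhigh : forall t, - (d / 2) <= t <= d / 2 -> f 0 / 2 * r ^ N <= F t).
  { intros t Ht. unfold F.
    assert (f 0 / 2 < f t) by (apply Hnear; rewrite Rminus_0_r; apply Rabs_le in Ht; lra).
    pose proof (one_plus_cos_pow_ge (d / 2) t N ltac:(split; [apply Rabs_le|]; lra)) as Hk.
    fold r in Hk. pose proof (pow_le r N ltac:(lra)).
    assert (0 <= (f t - f 0 / 2) * (1 + cos t) ^ N) by (apply Rmult_le_pos; lra).
    assert (0 <= f 0 / 2 * ((1 + cos t) ^ N - r ^ N)) by (apply Rmult_le_pos; lra).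
    lra. }
  rewrite <- (RInt_Chasles F (- PI) (- (d / 2)) PI),
    <- (RInt_Chasles F (- (d / 2)) (d / 2) PI) by apply HF.
  pose proof (RInt_ge_const F (- PI) (- (d / 2)) _ ltac:(lra) (HF _ _)
                ltac:(intros; apply Hlow; lra)).
  pose proof (RInt_ge_const F (- (d / 2)) (d / 2) _ ltac:(lra) (HF _ _)
                ltac:(intros; apply Hhigh; lra)).
  pose proof (RInt_ge_const F (d / 2) PI _ ltac:(lra) (HF _ _) ltac:(intros; apply Hlow; lra)).
  assert (Hsmall : 4 * PI * (M + 1) * q ^ N < d * f 0 * r ^ N).
  { replace (d * f 0 * r ^ N) with (4 * PI * (M + 1) * (d * f 0 / (4 * PI * (M + 1)) * r ^ N))
      by (field; lra).
    apply Rmult_lt_compat_l; [nra | exact HN]. }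
  assert (0 <= d * (M * q ^ N)) by (apply Rmult_le_pos; [lra | apply Rmult_le_pos; lra]).
  change (0 < RInt F (- PI) (- (d / 2)) + (RInt F (- (d / 2)) (d / 2) + RInt F (d / 2) PI)).
  nra.
Qed.

Lemma eq0_of_fourier_eq0 f : (forall x, continuous f x) -> periodic2pi f ->
  (forall m, fourier f m = RtoC 0) -> forall x, f x = 0.
Proof.
  intros Hc Hp Hz x.
  set (g := fun t => f (t - - x)).
  assert (Hgc : forall y, continuous g y).
  { intros y. apply (continuous_comp (fun t => t - - x) f); [continuous_by_derive | apply Hc]. }
  assert (Hgz : forall m, fourier g m = RtoC 0).
  { intros m. unfold g. rewrite fourier_comp_sub, Hz by assumption.
    apply injective_projections; cbn; ring. }
  assert (Hkernel : forall N, RInt (fun t => g t * (1 + cos t) ^ N) (- PI) PI = 0).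
  { intros N. assert (E : PI = - PI + 2 * PI) by ring. rewrite E at 2.
    rewrite RInt_period_shift.
    - rewrite (RInt_ext _ (fun t => g t * (cos (IZR 0 * t + 0) * (1 + cos t) ^ N))).
      + apply RInt_cos_kernel_eq0; assumption.
      + intros t _. cbn. rewrite Rmult_0_l, Rplus_0_l, cos_0. ring.
    - intros y. continuity_closure; [apply Hgc | continuous_by_derive].
    - intros t. unfold g. rewrite <- (cos_add_2PI_Z t 1), <- (Hp (t - - x)).
      f_equal; [f_equal | do 3 f_equal]; ring. }
  replace (f x) with (g 0) by (unfold g; f_equal; ring).
  destruct (Rtotal_order (g 0) 0) as [Hneg | [Hzero | Hpos]]; [exfalso | exact Hzero | exfalso].
  - destruct (RInt_cos_kernel_pos (fun t => - g t)) as [N HN].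
    + intros y. continuity_closure. apply Hgc.
    + lra.
    + rewrite (RInt_ext _ (fun t => -1 * (g t * (1 + cos t) ^ N))), RInt_scal_R, Hkernel in HN.
      * lra.
      * apply ex_RInt_continuous_R. intros y.
        continuity_closure; [apply Hgc | continuous_by_derive].
      * intros t _. cbn. ring.
  - destruct (RInt_cos_kernel_pos g Hgc Hpos) as [N HN]. rewrite Hkernel in HN. lra.
Qed.

Lemma fourier_inj f g : (forall x, continuous f x) -> (forall x, continuous g x) ->
  periodic2pi f -> periodic2pi g -> (forall m, fourier f m = fourier g m) -> forall x, f x = g x.
Proof.
  intros Hf Hg Hfp Hgp Hfg x.
  enough (f x + -1 * g x = 0) by lra.
  apply (eq0_of_fourier_eq0 (fun t => f t + -1 * g t)).
  - intros y. continuity_closure; auto.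
  - intros t. now rewrite Hfp, Hgp.
  - intros m. rewrite fourier_plus_scal, Hfg by assumption.
    apply injective_projections; cbn; ring.
Qed.

Lemma periodic2pi_Derive f : (forall x, ex_derive f x) -> periodic2pi f -> periodic2pi (Derive f).
Proof.
  intros Hf Hp t. transitivity (Derive (fun x => f (x + 2 * PI)) t).
  - rewrite (Derive_comp f (fun x => x + 2 * PI) t) by (apply Hf || (auto_derive; auto)).
    replace (Derive (fun x => x + 2 * PI) t) with 1
      by (symmetry; apply is_derive_unique; auto_derive; auto).
    ring.
  - apply Derive_ext. exact Hp.
Qed.

Lemma real_analytic_continuous f x : real_analytic f -> continuous f x.
Proof. intros [Hd _]. apply (@ex_derive_continuous R_AbsRing R_NormedModule), (Hd 1%nat x). Qed.

Lemma fourier_dcoef_perturb U V omega omega' u0 v0 s0 k n : v0 <> 0 -> (2 <= k)%nat ->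
  (forall j, (1 <= j)%nat -> forall x, continuous (U j) x) ->
  (forall j, (1 <= j)%nat -> forall m x, ex_derive_n (V j) m x) -> periodic2pi (V 1%nat) ->
  (forall i, (i <= k - 2)%nat -> omega i = omega' i) ->
  fourier (dcoef U V omega u0 v0 s0 k) n =
  Cplus (fourier (dcoef U V omega' u0 v0 s0 k) n)
    (Cmult (RtoC (u0 * s0 * (omega (k - 1)%nat - omega' (k - 1)%nat) / v0 ^ 2))
       (Cmult (cis (- (IZR n * (s0 * omega O))))
          (Cmult (Cmult (RtoC (IZR n)) Ci) (fourier (V 1%nat) n)))).
Proof.
  intros Hv0 Hk HU HV HVp Homega.
  destruct k as [|N]; [lia|]. replace (S N - 1)%nat with N by lia.
  assert (HV1 : forall x, ex_derive (V 1%nat) x) by (intros; apply (HV 1%nat (le_n 1) 1%nat)).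
  assert (HdV1 : forall x, continuous (Derive (V 1%nat)) x)
    by (intros; apply (@ex_derive_continuous R_AbsRing R_NormedModule), (HV 1%nat (le_n 1) 2%nat)).
  rewrite (fourier_ext _ (fun t => dcoef U V omega' u0 v0 s0 (S N) t
             + u0 * s0 * (omega N - omega' N) / v0 ^ 2 * Derive (V 1%nat) (t - s0 * omega O))).
  - rewrite fourier_plus_scal, fourier_comp_sub, fourier_Derive; auto using periodic2pi_Derive.
    + intros x. apply continuous_dcoef; auto.
    + intros x. apply (continuous_comp (fun t => t - s0 * omega O) (Derive (V 1%nat)));
        [continuous_by_derive | apply HdV1].
  - intros t.
    assert (Hagree : forall i, (i < N)%nat -> omega i = omega' i) by (intros; apply Homega; lia).
    pose proof (dcoef_perturb omega omega' s0 t N ltac:(lia) Hagree U V u0 v0 Hv0). lra.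
Qed.

Definition analytic_periodic_family (F : nat -> R -> R) : Prop :=
  forall j, (1 <= j)%nat -> real_analytic (F j) /\ periodic2pi (F j).

Definition fourier_data (k : nat) (F : nat -> R -> R) : nat -> Z -> C :=
  fun j m => if andb (1 <=? j)%nat (j <=? k)%nat then fourier (F j) m else RtoC 0.

Definition truncation (K : nat) (omega : nat -> R) : nat -> R :=
  fun j => if (j <=? K)%nat then omega j else 0.

Definition leading_term (u0 v0 s0 : R) (k : nat) (n : Z) (omega : nat -> R) (V1 : R -> R) : C :=
  Cmult (Cmult (Cmult (RtoC (u0 / v0 / v0 * IZR n * omega (k - 1)%nat * s0)) Ci) (fourier V1 n))
        (cis (- (IZR n * omega O * s0))).

Lemma fourier_data_inj k F G : analytic_periodic_family F -> analytic_periodic_family G ->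
  fourier_data k F = fourier_data k G -> forall j, (1 <= j <= k)%nat -> F j = G j.
Proof.
  intros HF HG Hdata j Hj.
  destruct (HF j ltac:(lia)) as [HFa HFp], (HG j ltac:(lia)) as [HGa HGp].
  apply functional_extensionality, fourier_inj; auto using real_analytic_continuous.
  intros m. apply (f_equal (fun D => D j m)) in Hdata. unfold fourier_data in Hdata.
  replace (andb (1 <=? j)%nat (j <=? k)%nat) with true in Hdata
    by (symmetry; apply andb_true_intro; split; apply Nat.leb_le; lia).
  exact Hdata.
Qed.

Lemma truncation_inj K omega omega' :
  truncation K omega = truncation K omega' -> forall i, (i <= K)%nat -> omega i = omega' i.
Proof.
  intros Htr i Hi. apply (f_equal (fun w => w i)) in Htr. unfold truncation in Htr.
  rewrite (proj2 (Nat.leb_le i K) Hi) in Htr. exact Htr.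
Qed.

Lemma fourier_dcoef_sub_leading_determined U V omega U' V' omega' u0 v0 s0 k n :
  v0 <> 0 -> (2 <= k)%nat ->
  analytic_periodic_family U -> analytic_periodic_family V ->
  analytic_periodic_family U' -> analytic_periodic_family V' ->
  fourier_data k U = fourier_data k U' -> fourier_data k V = fourier_data k V' ->
  truncation (k - 2) omega = truncation (k - 2) omega' ->
  Cminus (fourier (dcoef U V omega u0 v0 s0 k) n) (leading_term u0 v0 s0 k n omega (V 1%nat)) =
  Cminus (fourier (dcoef U' V' omega' u0 v0 s0 k) n) (leading_term u0 v0 s0 k n omega' (V' 1%nat)).
Proof.
  intros Hv0 Hk HU HV HU' HV' EU EV Ew.
  pose proof (truncation_inj _ _ _ Ew) as Homega.
  rewrite (fourier_ext _ (dcoef U' V' omega u0 v0 s0 k))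
    by (intros; apply dcoef_ext; apply fourier_data_inj; assumption).
  rewrite (fourier_dcoef_perturb U' V' omega omega'), (fourier_data_inj k V V' HV HV' EV); try lia;
    auto.
  - unfold leading_term. rewrite !(Homega O) by lia.
    replace (IZR n * (s0 * omega' O)) with (IZR n * omega' O * s0) by ring.
    generalize (fourier (dcoef U' V' omega' u0 v0 s0 k) n) (fourier (V' 1%nat) n)
      (cis (- (IZR n * omega' O * s0))). intros [d1 d2] [w1 w2] [c1 c2].
    apply injective_projections; cbn; field; exact Hv0.
  - intros j Hj x. apply real_analytic_continuous, HU', Hj.
  - intros j Hj. apply (HV' j Hj).
  - apply (HV' 1%nat (le_n 1)).
Qed.

Lemma factors_through {A B C : Type} (c0 : C) (P : A -> Prop) (obs : A -> B) (g : A -> C) :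
  (forall a a', P a -> P a' -> obs a = obs a' -> g a = g a') ->
  exists h : B -> C, forall a, P a -> g a = h (obs a).
Proof.
  intros Hinv.
  exists (fun b => epsilon (inhabits c0) (fun c => exists a, P a /\ obs a = b /\ g a = c)).
  intros a Ha.
  destruct (epsilon_spec (inhabits c0) (fun c => exists a', P a' /\ obs a' = obs a /\ g a' = c))
    as [a' [Ha' [Hobs <-]]]; [exists (g a), a; auto |].
  apply Hinv; auto.
Qed.

Theorem lemma3 (u0 v0 s0 : R) (k : nat) (n : Z) :
  0 < u0 -> 0 < v0 -> 1 < s0 -> (2 <= k)%nat ->
  exists H : (nat -> Z -> C) -> (nat -> Z -> C) -> (nat -> R) -> C,
  forall (omega : nat -> R) (U V : nat -> R -> R),
    0 < omega O ->
    (forall j, (1 <= j)%nat -> real_analytic (U j) /\ periodic2pi (U j)) ->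
    (forall j, (1 <= j)%nat -> real_analytic (V j) /\ periodic2pi (V j)) ->
    fourier (dcoef U V omega u0 v0 s0 k) n =
      Cplus
        (Cmult (Cmult (Cmult (RtoC (u0 / v0 / v0 * IZR n * omega (k - 1)%nat * s0)) Ci)
                      (fourier (V 1%nat) n))
               (cis (- (IZR n * omega O * s0))))
        (H (fun j m => if andb (1 <=? j)%nat (j <=? k)%nat then fourier (U j) m else RtoC 0)
           (fun j m => if andb (1 <=? j)%nat (j <=? k)%nat then fourier (V j) m else RtoC 0)
           (fun j => if (j <=? k - 2)%nat then omega j else 0)).
Proof.
  intros _ Hv0 _ Hk.
  destruct (factors_through (RtoC 0)
    (fun '(omega, U, V) => analytic_periodic_family U /\ analytic_periodic_family V)
    (fun '(omega, U, V) => (fourier_data k U, fourier_data k V, truncation (k - 2) omega))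
    (fun '(omega, U, V) => Cminus (fourier (dcoef U V omega u0 v0 s0 k) n)
                                  (leading_term u0 v0 s0 k n omega (V 1%nat))))
    as [h Hh].
  - intros [[omega U] V] [[omega' U'] V'] [HU HV] [HU' HV'] Hdata. injection Hdata as EU EV Ew.
    apply fourier_dcoef_sub_leading_determined; auto. lra.
  - exists (fun Uh Vh wh => h (Uh, Vh, wh)). intros omega U V _ HU HV.
    specialize (Hh (omega, U, V) (conj HU HV)).
    transitivity (Cplus (leading_term u0 v0 s0 k n omega (V 1%nat))
                        (h (fourier_data k U, fourier_data k V, truncation (k - 2) omega))).
    + rewrite <- Hh. generalize (fourier (dcoef U V omega u0 v0 s0 k) n). intros [d1 d2].
      apply injective_projections; cbn; ring.
    + reflexivity.
Qed.
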